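(* Let $\Sigma$ be a signature, $X,Y$ sets, $H$ an interpretation of $\Sigma$ over $Y$, $f:X\to Y$, and $\varphi = f^\dagger_H:[\![\Sigma]\!]X\to Y$. Then for every well-typed template $\Gamma;Z\vdash T:\Sigma$ with $Z=(z_j:B_j\to * )_j$, every $\eta\in[\![\Gamma]\!]$ and every $\zeta=(\zeta_j)_j\in[\![Z]\!]([\![\Sigma]\!]X)$, $$\varphi\big([\![T]\!]_{F^X_\Sigma}(\eta;\zeta)\big) = [\![T]\!]_H\big(\eta;(\varphi\circ\zeta_j)_j\big).$$ Moreover, every function $\varphi:[\![\Sigma]\!]X\to Y$ satisfying this equation for all well-typed templates $T$ over $\Sigma$ (in all contexts $\Gamma$, $Z$) and all $\eta,\zeta$ is of the form $f^\dagger_H$ for some function $f:X\to Y$.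
   Context: Setting: a calculus of algebraic effects. Value types $A,B ::= \mathtt{unit}\mid\mathtt{bool}\mid A\to\underline{C}\mid\underline{C}\Rightarrow\underline{D}$; computation types $A\,!\,\Sigma/\mathcal{E}$, where a signature $\Sigma$ is a finite set of typed operations $\mathit{op}:A_{\mathit{op}}\to B_{\mathit{op}}$ with distinct names. Values $v ::= x \mid () \mid \mathtt{true} \mid \mathtt{false} \mid \mathtt{fun}\ x \mapsto c \mid \mathtt{handler}\,(\ldots)$; value contexts $\Gamma=(x_i:A_i)_i$; well-typed values $\Gamma\vdash v:A$ have denotations $[\![v]\!]:[\![\Gamma]\!]\to[\![A]\!]$, where $[\![\varepsilon]\!]=\{\star\}$, $[\![\Gamma,x:A]\!]=[\![\Gamma]\!]\times[\![A]\!]$, $[\![\mathtt{unit}]\!]=\{\star\}$, $[\![\mathtt{bool}]\!]=\{\mathrm{ff},\mathrm{tt}\}$, $[\![\mathtt{true}]\!]\eta=\mathrm{tt}$, $[\![\mathtt{false}]\!]\eta=\mathrm{ff}$, variables denote projections, and function/handler types denote sets of functions. For a set $X$, $[\![\Sigma]\!]X$ is the inductively defined set with elements $\mathrm{in}_{\mathrm{return}}(a)$ for $a\in X$ and $\mathrm{in}_{\mathit{op}}(a;\kappa)$ for $(\mathit{op}:A_{\mathit{op}}\to B_{\mathit{op}})\in\Sigma$, $a\in[\![A_{\mathit{op}}]\!]$, $\kappa:[\![B_{\mathit{op}}]\!]\to[\![\Sigma]\!]X$. An interpretation $H$ of $\Sigma$ over a set $Y$ is a family of functions $H_{\mathit{op}}:[\![A_{\mathit{op}}]\!]\times([\![B_{\mathit{op}}]\!]\to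 Y)\to Y$, $\mathit{op}\in\Sigma$. The free interpretation $F^X_\Sigma$ over $[\![\Sigma]\!]X$ is $(F^X_\Sigma)_{\mathit{op}}(a,\kappa)=\mathrm{in}_{\mathit{op}}(a;\kappa)$. For $f:X\to Y$ the lift $f^\dagger_H:[\![\Sigma]\!]X\to Y$ is defined recursively by $f^\dagger_H(\mathrm{in}_{\mathrm{return}}(x))=f(x)$ and $f^\dagger_H(\mathrm{in}_{\mathit{op}}(x;\kappa))=H_{\mathit{op}}(x,f^\dagger_H\circ\kappa)$. Templates: $T ::= z(v)\mid\mathtt{if}\ v\ \mathtt{then}\ T_1\ \mathtt{else}\ T_2\mid\mathit{op}(v;y.T)$, typed in a value context $\Gamma$ and a template context $Z=(z_j:B_j\to * )_j$: $\Gamma;Z\vdash z(v):\Sigma$ if $(z:A\to * )\in Z$ and $\Gamma\vdash v:A$; $\Gamma;Z\vdash\mathtt{if}\ v\ \mathtt{then}\ T_1\ \mathtt{else}\ T_2:\Sigma$ if $\Gamma\vdash v:\mathtt{bool}$ and $\Gamma;Z\vdash T_i:\Sigma$; $\Gamma;Z\vdash\mathit{op}(v;y.T):\Sigma$ if $(\mathit{op}:A_{\mathit{op}}\to B_{\mathit{op}})\in\Sigma$, $\Gamma\vdash v:A_{\mathit{op}}$, $\Gamma,y:B_{\mathit{op}};Z\vdash T:\Sigma$. For a set $Y$, $[\![Z]\!]Y=\prod_j Y^{[\![B_j]\!]}$. For an interpretation $H$ of $\Sigma$ over $Y$, the template denotation $[\![T]\!]_H:[\![\Gamma]\!]\times[\![Z]\!]Y\to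 Y$ is defined by $[\![z_j(v)]\!]_H(\eta;\zeta)=\zeta_j([\![v]\!]\eta)$; $[\![\mathtt{if}\ v\ \mathtt{then}\ T_1\ \mathtt{else}\ T_2]\!]_H(\eta;\zeta)$ equals $[\![T_1]\!]_H(\eta;\zeta)$ if $[\![v]\!]\eta=\mathrm{tt}$ and $[\![T_2]\!]_H(\eta;\zeta)$ if $[\![v]\!]\eta=\mathrm{ff}$; $[\![\mathit{op}(v;y.T)]\!]_H(\eta;\zeta)=H_{\mathit{op}}([\![v]\!]\eta,\lambda b.[\![T]\!]_H((\eta,b);\zeta))$. *)

From mathcomp Require Import all_boot.
Set Implicit Arguments.
Unset Strict Implicit.
Unset Printing Implicit Defensive.

(* Syntax of types.  The effect theories E appearing in computation types   *)
(* A ! Sigma / E are drawn from an arbitrary type [eqn] of equations.        *)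
(* A signature is a finite list of operation types (A_op, B_op); the name   *)
(* of an operation is its position in the list, so names are distinct.      *)
Section Syntax.
Variable eqn : Type.
Inductive vty : Type :=
| TUnit
| TBool
| TFun (A : vty) (C : cty)
| THand (C D : cty)
with cty : Type :=
| CComp (A : vty) (S : seq (vty * vty)) (E : seq eqn).
End Syntax.
Arguments TUnit {eqn}.
Arguments TBool {eqn}.

Section Semantics.
Variable eqn : Type.

Definition sig := seq (vty eqn * vty eqn).

(* The denotations of function and handler types ("sets of functions") are   *)
(* left abstract: the results hold for any choice of them.                   *)
Record model := Model {
  denFun : vty eqn -> cty eqn -> Type;
  denHand : cty eqn -> cty eqn -> Type
}.

Variable M : model.

Fixpoint den (A : vty eqn) : Type :=
  match A with
  | TUnit => unit
  | TBool => bool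
  | TFun A C => denFun M A C
  | THand C D => denHand M C D
  end.

Inductive ctx : Type := cnil | csnoc (G : ctx) (A : vty eqn).

Fixpoint denC (G : ctx) : Type :=
  match G with
  | cnil => unit
  | csnoc G A => (denC G * den A)%type
  end.

Inductive var : ctx -> vty eqn -> Type :=
| Vz G A : var (csnoc G A) A
| Vs G A B : var G A -> var (csnoc G B) A.

Fixpoint var_den G A (x : var G A) : denC G -> den A :=
  match x in var G A return denC G -> den A with
  | Vz _ _ => fun e => e.2
  | Vs _ _ _ x => fun e => var_den x e.1
  end.

(* The value language: well-typed values Gamma |- v : A with denotations     *)
(* [[v]] : [[Gamma]] -> [[A]], containing at least variables (denoting       *)
(* projections), (), true and false.  The remaining value formers (fun,      *)
(* handler) are left abstract.                                               *)
Record valcalc := ValCalc {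
  val : ctx -> vty eqn -> Type;
  vden : forall G A, val G A -> denC G -> den A;
  vvar : forall G A, var G A -> val G A;
  vunit : forall G, val G TUnit;
  vtrue : forall G, val G TBool;
  vfalse : forall G, val G TBool;
  vden_var : forall G A (x : var G A) e, vden (vvar x) e = var_den x e;
  vden_true : forall G e, vden (vtrue G) e = true;
  vden_false : forall G e, vden (vfalse G) e = false
}.

Variable Sg : sig.

Definition opA (o : 'I_(size Sg)) : vty eqn := (nth (TUnit, TUnit) Sg o).1.
Definition opB (o : 'I_(size Sg)) : vty eqn := (nth (TUnit, TUnit) Sg o).2.

Inductive free (X : Type) : Type :=
| in_ret (x : X)
| in_op (o : 'I_(size Sg)) (a : den (opA o)) (k : den (opB o) -> free X).

Definition interp (Y : Type) : Type :=
  forall o : 'I_(size Sg), (den (opA o) * (den (opB o) -> Y))%type -> Y.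

Definition free_interp (X : Type) : interp (free X) :=
  fun o p => in_op p.1 p.2.

Fixpoint lift_h (X Y : Type) (H : interp Y) (f : X -> Y) (t : free X) : Y :=
  match t with
  | in_ret x => f x
  | in_op o a k => H o (a, fun b => lift_h H f (k b))
  end.

Variable VC : valcalc.

Inductive tmpl (Z : seq (vty eqn)) : ctx -> Type :=
| Tz G (j : 'I_(size Z)) (v : val VC G (nth TUnit Z j)) : tmpl Z G
| Tif G (v : val VC G TBool) (T1 T2 : tmpl Z G) : tmpl Z G
| Top G (o : 'I_(size Sg)) (v : val VC G (opA o))
      (T : tmpl Z (csnoc G (opB o))) : tmpl Z G.

Definition denZ (Z : seq (vty eqn)) (Y : Type) : Type :=
  forall j : 'I_(size Z), den (nth TUnit Z j) -> Y.

Fixpoint tden (Z : seq (vty eqn)) (Y : Type) (H : interp Y) G (T : tmpl Z G)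
  : denC G -> denZ Z Y -> Y :=
  match T in tmpl _ G return denC G -> denZ Z Y -> Y with
  | Tz _ j v => fun e z => z j (vden v e)
  | Tif _ v T1 T2 => fun e z =>
      if vden v e then tden H T1 e z else tden H T2 e z
  | Top _ o v T => fun e z => H o (vden v e, fun b => tden H T (e, b) z)
  end.

End Semantics.

From mathcomp Require Import all_boot.
From Stdlib Require Import FunctionalExtensionality.

(** A homomorphism of interpretations commutes with every template
   denotation, and [f^dagger_H] is a homomorphism out of the free
   interpretation.  Conversely, commuting with the single template
   [op(x; y. z(y))] already makes [phi] a homomorphism out of the free
   interpretation, and such a homomorphism is the lift of [phi \o in_ret]. *)

Section Templates.
Variables (eqn : Type) (M : model eqn) (Sg : sig eqn) (VC : valcalc M).

Definition interp_hom {Y1 Y2 : Type} (H1 : interp M Sg Y1)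
    (H2 : interp M Sg Y2) (h : Y1 -> Y2) : Prop :=
  forall o a k, h (H1 o (a, k)) = H2 o (a, h \o k).

Lemma tden_hom (Y1 Y2 : Type) (H1 : interp M Sg Y1) (H2 : interp M Sg Y2)
    (h : Y1 -> Y2) :
  interp_hom H1 H2 h ->
  forall Z G (T : tmpl Sg VC Z G) (eta : denC M G) (zeta : denZ M Z Y1),
    h (tden H1 T eta zeta) = tden H2 T eta (fun j => h \o zeta j).
Proof.
move=> hom_h Z G T; elim: T => {G} [G j v|G v T1 IH1 T2 IH2|G o v T IH] eta zeta /=.
- by [].
- by case: (vden v eta).
- rewrite hom_h; congr (H2 o (_, _)).
  by apply: functional_extensionality => b; exact: IH.
Qed.

(* Defined by matching so that [denZ1 k ord0] reduces to [k]. *)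
Definition denZ1 {B : vty eqn} {F : Type} (k : den M B -> F) : denZ M [:: B] F :=
  fun j => match j with
  | Ordinal m lt_m1 =>
      match m return m < 1 -> den M (nth TUnit [:: B] m) -> F with
      | 0 => fun _ => k
      | m'.+1 => fun lt_m'1 => False_rect _ (notF lt_m'1)
      end lt_m1
  end.

Definition generic_op (o : 'I_(size Sg)) :
    tmpl Sg VC [:: opB o] (csnoc (cnil eqn) (opA o)) :=
  Top (o := o) (vvar VC (Vz _ _))
    (Tz Sg (Z := [:: opB o]) (j := ord0) (vvar VC (Vz _ _))).

Lemma tden_generic_op (F : Type) (HF : interp M Sg F) (o : 'I_(size Sg))
    (a : den M (opA o)) (zeta : denZ M [:: opB o] F) :
  tden HF (generic_op o) (tt, a) zeta = HF o (a, zeta ord0).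
Proof.
rewrite /= vden_var; congr (HF o (_, _)).
by apply: functional_extensionality => b; rewrite vden_var.
Qed.

Variables (X Y : Type) (H : interp M Sg Y).

Lemma lift_h_hom (f : X -> Y) : interp_hom (@free_interp _ M Sg X) H (lift_h H f).
Proof. by []. Qed.

Lemma free_hom_lift_h (phi : free M Sg X -> Y) :
  interp_hom (@free_interp _ M Sg X) H phi ->
  phi = lift_h H (phi \o @in_ret _ M Sg X).
Proof.
move=> hom_phi; apply: functional_extensionality.
elim=> [x|o a k IH] //=; rewrite hom_phi; congr (H o (_, _)).
exact: functional_extensionality.
Qed.

Lemma tden_commute_hom (phi : free M Sg X -> Y) :
  (forall Z G (T : tmpl Sg VC Z G) (eta : denC M G)
          (zeta : denZ M Z (free M Sg X)),
     phi (tden (@free_interp _ M Sg X) T eta zeta)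
     = tden H T eta (fun j => phi \o zeta j)) ->
  interp_hom (@free_interp _ M Sg X) H phi.
Proof.
move=> commute_phi o a k.
by have := commute_phi _ _ (generic_op o) (tt, a) (denZ1 k);
  rewrite !tden_generic_op.
Qed.

End Templates.

Theorem lemma9 (eqn : Type) (M : model eqn) (VC : valcalc M) (Sg : sig eqn)
    (X Y : Type) (H : interp M Sg Y) (f : X -> Y) :
  (forall (Z : seq (vty eqn)) (G : ctx eqn) (T : tmpl Sg VC Z G)
          (eta : denC M G) (zeta : denZ M Z (free M Sg X)),
      lift_h H f (tden (@free_interp _ M Sg X) T eta zeta)
      = tden H T eta (fun j => lift_h H f \o zeta j))
  /\
  (forall phi : free M Sg X -> Y,
     (forall (Z : seq (vty eqn)) (G : ctx eqn) (T : tmpl Sg VC Z G)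
             (eta : denC M G) (zeta : denZ M Z (free M Sg X)),
        phi (tden (@free_interp _ M Sg X) T eta zeta)
        = tden H T eta (fun j => phi \o zeta j)) ->
     exists g : X -> Y, phi = lift_h H g).
Proof.
split; first exact/tden_hom/lift_h_hom.
move=> phi commute_phi; exists (phi \o @in_ret _ M Sg X).
exact/free_hom_lift_h/tden_commute_hom.
Qed.
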